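(* Hourglass persistence is more expressive than FB-persistence: for every graph $G$ with filtration function $f$, the FB-persistence sequence of $(G,f)$ is one of the hourglass sequences of $(G,f)$; and there exist graphs $G,H$ with the degree filtration whose FB-persistence diagrams coincide in all degrees, but for which some hourglass schedule (a prescribed order, in terms of the indices of the intermediate complexes, of including and contracting them), applied to both, yields different persistence diagrams.
   Context: Graphs are finite, undirected, possibly with self-loops and multi-edges. A filtration function on $G=(V,E)$ is $f:V\cup E\to\mathbb{R}$ with $f(v),f(w)\le f(e)$ for each edge $e=(v,w)$; degree filtration: $f(v)=\deg v$, $f(e)=\max(f(v),f(w))$. With distinct values $a_0<\dots<a_n$, $G_{-1}=\emptyset$, $G_i=f^{-1}((-\infty,a_i])$, and the intermediate complex $\mathrm{IC}_i(G,f)$ is the subgraph formed by the vertices and edges of $G_i\setminus G_{i-1}$ together with endpoints of those edges. Persistence diagrams of a sequence of spaces and continuous maps are those of the interval decomposition of $H_k(-;\mathbb{Z}/2)$ applied to it (indexed by positions). FB-persistence: the sequence $G_0\subset\dots\subset G_n=G\to G/\mathrm{IC}_n\to\dots\to\text{point}$ which first includes and then contracts $\mathrm{IC}_n,\mathrm{IC}_{n-1},\dots,\mathrm{IC}_0$ in turn (each contraction collapses the piece together with the point to which previously contracted pieces were collapsed). An hourglass sequence is any sequence starting at $\emptyset$ in which each step either includes (adjoins) some $\mathrm{IC}_j$, or contracts (quotients, together with the previously contracted point) some $\mathrm{IC}_j$ that has already been included, every $\mathrm{IC}_j$ being included before it is contracted; hourglass persistence diagrams are the persistence diagrams of such sequences.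 *)

From HB Require Import structures.
From mathcomp Require Import all_boot all_order all_algebra.
Set Implicit Arguments. Unset Strict Implicit. Unset Printing Implicit Defensive.
Import Order.TTheory GRing.Theory Num.Theory.
Local Open Scope ring_scope.

(* A finite undirected multigraph, self-loops allowed: every edge e has two
   endpoints gsrc e and gtgt e (their order is irrelevant). *)
Record graph := Graph {
  gV : finType; gE : finType; gsrc : gE -> gV; gtgt : gE -> gV }.

(* A "space" occurring in an hourglass / FB sequence: the subgraph
   (sVI, sEI) of G that has been included so far, quotiented by the subgraph
   (sVC, sEC) (union of the contracted pieces), collapsed to one point. *)
Record stage (G : graph) := Stage {
  sVI : {set gV G}; sEI : {set gE G}; sVC : {set gV G}; sEC : {set gE G} }.

Definition empty_stage (G : graph) : stage G := @Stage G set0 set0 set0 set0.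

Section Filtration.
Variables (G : graph) (R : realDomainType) (fv : gV G -> R) (fe : gE G -> R).

Definition is_filtration : Prop :=
  forall e, fv (gsrc e) <= fe e /\ fv (gtgt e) <= fe e.

(* the distinct values a_0 < ... < a_n ; nIC = n + 1 *)
Definition fvals : seq R :=
  sort (fun x y : R => x <= y)
       (undup (map fv (enum (gV G)) ++ map fe (enum (gE G)))).
Definition nIC : nat := size fvals.
Definition aval (i : nat) : R := nth 0 fvals i.

(* G_i and G_{i-1} (G_{-1} = empty) *)
Definition sublevelV (i : nat) : {set gV G} := [set v | fv v <= aval i].
Definition sublevelE (i : nat) : {set gE G} := [set e | fe e <= aval i].
Definition prevV (i : nat) : {set gV G} :=
  if i is i'.+1 then sublevelV i' else set0.
Definition prevE (i : nat) : {set gE G} :=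
  if i is i'.+1 then sublevelE i' else set0.

Definition ICE (i : nat) : {set gE G} := sublevelE i :\: prevE i.
Definition ICV (i : nat) : {set gV G} :=
  (sublevelV i :\: prevV i) :|:
  [set v | [exists e in ICE i, (gsrc e == v) || (gtgt e == v)]].

(* FB-persistence sequence G_0 ⊂ ... ⊂ G_n = G -> G/IC_n -> ... -> point *)
Definition fb_stages : seq (stage G) :=
  [seq @Stage G (sublevelV k) (sublevelE k) set0 set0 | k <- iota 0 nIC] ++
  [seq @Stage G setT setT
        (\bigcup_(i < nIC | (nIC - m <= i)%N) ICV i)
        (\bigcup_(i < nIC | (nIC - m <= i)%N) ICE i) | m <- iota 1 nIC].

(* A schedule step (true, j) = include IC_j ; (false, j) = contract IC_j. *)
Definition hg_stage (p : seq (bool * nat)) : stage G :=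
  @Stage G (\bigcup_(i < nIC | (true, val i) \in p) ICV i)
           (\bigcup_(i < nIC | (true, val i) \in p) ICE i)
           (\bigcup_(i < nIC | (false, val i) \in p) ICV i)
           (\bigcup_(i < nIC | (false, val i) \in p) ICE i).

Definition hg_stages (s : seq (bool * nat)) : seq (stage G) :=
  [seq hg_stage (take k s) | k <- iota 0 (size s).+1].

End Filtration.

Definition hourglass_schedule (N : nat) (s : seq (bool * nat)) : Prop :=
  perm_eq s ([seq (true, j) | j <- iota 0 N] ++ [seq (false, j) | j <- iota 0 N])
  /\ forall j, (j < N)%N -> (index (true, j) s < index (false, j) s)%N.

(* Cellular homology with Z/2 coefficients of the 1-dimensional CW complex
   (included subgraph)/(contracted subgraph), and ranks of the maps induced by
   inclusion/quotient between two stages.  Chains are row vectors; the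
   0-cells are indexed by option V (None = the collapsed point). *)
Section Homology.
Variable G : graph.
Local Notation V := (gV G).
Local Notation E := (gE G).
Local Notation nE := #|E|.
Local Notation nV := #|{: option V}|.

Definition vact (st : stage G) (w : option V) : bool :=
  if w is Some v then (v \in sVI st) && (v \notin sVC st) else sVC st != set0.
Definition eact (st : stage G) (e : E) : bool :=
  (e \in sEI st) && (e \notin sEC st).
Definition rho (st : stage G) (w : option V) : option V :=
  if w is Some v then (if v \in sVC st then None else Some v) else None.

Definition vdelta (w : option V) : 'rV['F_2]_nV := delta_mx 0 (enum_rank w).

Definition bdmx (st : stage G) : 'M['F_2]_(nE, nV) :=
  \matrix_(i < nE) (let e := enum_val i in
     if eact st e then vdelta (rho st (Some (gsrc e))) + vdelta (rho st (Some (gtgt e)))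
     else 0).
Definition C1mx (st : stage G) : 'M['F_2]_nE :=
  \matrix_(i < nE) (if eact st (enum_val i) then delta_mx 0 i else 0).
Definition C0mx (st : stage G) : 'M['F_2]_nV :=
  \matrix_(i < nV) (if vact st (enum_val i) then delta_mx 0 i else 0).
Definition Pmx (t : stage G) : 'M['F_2]_nE :=
  \matrix_(i < nE) (if enum_val i \in sEC t then 0 else delta_mx 0 i).
Definition Rmx (t : stage G) : 'M['F_2]_nV :=
  \matrix_(i < nV) vdelta (rho t (enum_val i)).

(* H_1 = cycles (no 2-cells) *)
Definition H1mx (st : stage G) : 'M['F_2]_nE := (C1mx st :&: kermx (bdmx st))%MS.
Definition rank1 (s t : stage G) : nat := \rank (H1mx s *m Pmx t).
(* H_0 = 0-chains / boundaries *)
Definition rank0 (s t : stage G) : nat :=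
  (\rank (C0mx s *m Rmx t + bdmx t)%MS - \rank (bdmx t))%N.
Definition hrank (k : nat) (s t : stage G) : nat :=
  match k with 0 => rank0 s t | 1 => rank1 s t | _ => 0%N end.

Definition prank (L : seq (stage G)) (k b d : nat) : nat :=
  if (b <= d < size L)%N
  then hrank k (nth (empty_stage G) L b) (nth (empty_stage G) L d) else 0%N.

(* persistence diagram: multiplicity of the interval [b, d] in the interval
   decomposition of H_k(L;Z/2), given by the inclusion-exclusion formula on
   the rank invariant. *)
Definition pdgm (L : seq (stage G)) (k b d : nat) : int :=
  if (b <= d)%N then
    (prank L k b d)%:Z - (if b is b'.+1 then (prank L k b' d)%:Z else 0)
    - (prank L k b d.+1)%:Z + (if b is b'.+1 then (prank L k b' d.+1)%:Z else 0)
  else 0.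
End Homology.

(* degree filtration; a self-loop contributes 2 to the degree *)
Definition deg (G : graph) (v : gV G) : nat :=
  (#|[set e | gsrc e == v]| + #|[set e | gtgt e == v]|)%N.
Definition degv (G : graph) : gV G -> int := fun v => (deg v)%:Z.
Definition dege (G : graph) : gE G -> int :=
  fun e => (maxn (deg (gsrc e)) (deg (gtgt e)))%:Z.

From HB Require Import structures.
From mathcomp Require Import all_boot all_order all_algebra.
From mathcomp Require Import zify.
Set Implicit Arguments. Unset Strict Implicit. Unset Printing Implicit Defensive.
Import Order.TTheory GRing.Theory Num.Theory.

(* The FB sequence is the hourglass sequence of the schedule that includes
   IC_0, ..., IC_n in increasing order and then contracts IC_n, ..., IC_0:
   G_k is the union of IC_0, ..., IC_k, because the endpoints of an edge have
   values at most that of the edge.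

   For the separating pair, G is a loop at 0, an edge 0-1 and a disjoint loop
   at 2, and H is a loop at 0, a path 0-1-2 and a disjoint loop at 3.  Both
   degree filtrations take the values 1 < 2 < 3 and have the same FB diagrams.
   Under the schedule "include IC_0, IC_1, IC_2, contract IC_0, IC_2, IC_1",
   however, contracting IC_0 and IC_2 in H collapses both ends of the edge 1-2
   of IC_1, which becomes a loop: H_1 acquires a class living only at position
   5, which G does not have.

   The homology ranks of these two examples are evaluated by computation:
   Gaussian elimination over Z/2 on boolean rows, proved to compute the matrix
   rank, applied to the stages rewritten with boolean predicates in place of
   finite sets (which do not reduce). *)

Section Layers.
Variables (T : finType) (N : nat) (lev IC : nat -> {set T}).
Hypothesis lev_mono : forall i j, i <= j < N -> lev i \subset lev j.
Hypothesis IC_sub : forall i, i < N -> IC i \subset lev i.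
Hypothesis IC_sup : forall i, i < N ->
  lev i :\: (if i is i'.+1 then lev i' else set0) \subset IC i.

Lemma bigcup_layers k : k < N -> \bigcup_(i < N | i < k.+1) IC i = lev k.
Proof.
move=> lt_kN; apply/eqP; rewrite eqEsubset; apply/andP; split.
  apply/bigcupsP => i le_ik; apply: subset_trans (IC_sub (ltn_ord i)) _.
  by apply: lev_mono; rewrite -ltnS le_ik.
elim: k lt_kN => [|k IH] lt_kN; apply/subsetP => x lev_x.
  apply/bigcupP; exists (Ordinal lt_kN) => //.
  by apply/(subsetP (IC_sup lt_kN)); rewrite in_setD in_set0 lev_x.
case: (boolP (x \in lev k)) => [/(subsetP (IH (ltnW lt_kN)))|nlev_x].
  by case/bigcupP=> i lt_ik ICx; apply/bigcupP; exists i => //; apply: leqW.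
apply/bigcupP; exists (Ordinal lt_kN) => //=.
by apply/(subsetP (IC_sup lt_kN)); rewrite inE nlev_x.
Qed.

Lemma bigcup_layers_setT : (forall x, exists2 k, k < N & x \in lev k) ->
  \bigcup_(i < N) IC i = setT.
Proof.
move=> cover; apply/setP => x; rewrite inE; have [k lt_kN] := cover x.
rewrite -(bigcup_layers lt_kN) => /bigcupP[i _ ICx].
by apply/bigcupP; exists i.
Qed.

End Layers.

Section FBSchedule.
Variable N : nat.

Definition fb_schedule : seq (bool * nat) :=
  [seq (true, j) | j <- iota 0 N] ++ [seq (false, j) | j <- rev (iota 0 N)].

Lemma index_fb_include i : i < N -> index (true, i) fb_schedule = i.
Proof.
move=> lt_iN; rewrite index_cat map_f ?mem_iota // index_map; last by move=> ? ? [].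
have nth_i : nth 0 (iota 0 N) i = i by rewrite nth_iota.
by rewrite -{1}nth_i index_uniq ?iota_uniq ?size_iota.
Qed.

Lemma index_fb_contract i : i < N -> index (false, i) fb_schedule = N + (N - i.+1).
Proof.
move=> lt_iN; rewrite index_cat ifF; last by apply/negbTE/mapP => -[].
rewrite size_map size_iota index_map; last by move=> ? ? [].
have lt_jN : N - i.+1 < size (rev (iota 0 N)) by rewrite size_rev size_iota; lia.
have nth_i : nth 0 (rev (iota 0 N)) (N - i.+1) = i.
  by rewrite nth_rev size_iota ?nth_iota; lia.
by rewrite -{1}nth_i index_uniq ?rev_uniq ?iota_uniq.
Qed.

Lemma mem_fb_schedule b i : i < N -> (b, i) \in fb_schedule.
Proof. by move=> lt_iN; rewrite mem_cat; case: b; rewrite map_f ?orbT ?mem_rev ?mem_iota. Qed.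

Lemma fb_schedule_hourglass : hourglass_schedule N fb_schedule.
Proof.
split; first by rewrite perm_cat2l map_rev; apply/permPl/perm_rev.
by move=> j lt_jN; rewrite index_fb_include ?index_fb_contract //; lia.
Qed.

Lemma mem_take_fb_include t i : i < N ->
  ((true, i) \in take t fb_schedule) = (i < t).
Proof. by move=> lt_iN; rewrite in_take ?index_fb_include ?mem_fb_schedule. Qed.

Lemma mem_take_fb_contract t i : i < N ->
  ((false, i) \in take t fb_schedule) = (N + (N - i.+1) < t).
Proof. by move=> lt_iN; rewrite in_take ?index_fb_contract ?mem_fb_schedule. Qed.

End FBSchedule.

Section FBisHourglass.
Variables (R : realDomainType) (G : graph) (fv : gV G -> R) (fe : gE G -> R).
Hypothesis filt : is_filtration fv fe.
Local Notation N := (nIC fv fe).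

Lemma aval_mono i j : i <= j < N -> (aval fv fe i <= aval fv fe j)%R.
Proof.
case/andP=> le_ij lt_jN; apply: le_sorted_leq_nth => //.
- by apply: sort_sorted; exact: le_total.
- by rewrite inE (leq_ltn_trans le_ij).
Qed.

Lemma sublevelV_mono i j : i <= j < N -> sublevelV fv fe i \subset sublevelV fv fe j.
Proof. by move=> ijN; apply/subsetP => v; rewrite !inE => /le_trans; apply; apply: aval_mono. Qed.

Lemma sublevelE_mono i j : i <= j < N -> sublevelE fv fe i \subset sublevelE fv fe j.
Proof. by move=> ijN; apply/subsetP => e; rewrite !inE => /le_trans; apply; apply: aval_mono. Qed.

Lemma ICE_sub i : ICE fv fe i \subset sublevelE fv fe i.
Proof. exact: subsetDl. Qed.

Lemma ICV_sub i : ICV fv fe i \subset sublevelV fv fe i.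
Proof.
apply/subsetP => v; rewrite !inE => /orP[/andP[_ //]|/existsP[e /andP[]]].
rewrite !inE => /andP[_ fe_le] /orP[]/eqP<-;
  by have [? ?] := filt e; apply: le_trans fe_le.
Qed.

Lemma fvals_index (x : R) : x \in fvals fv fe ->
  index x (fvals fv fe) < N /\ aval fv fe (index x (fvals fv fe)) = x.
Proof. by move=> x_in; rewrite index_mem /aval nth_index. Qed.

Lemma mem_fvals_V v : fv v \in fvals fv fe.
Proof. by rewrite mem_sort mem_undup mem_cat map_f ?mem_enum. Qed.

Lemma mem_fvals_E e : fe e \in fvals fv fe.
Proof. by rewrite mem_sort mem_undup mem_cat map_f ?mem_enum ?orbT. Qed.

Lemma bigcup_ICV k : k < N -> \bigcup_(i < N | i < k.+1) ICV fv fe i = sublevelV fv fe k.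
Proof.
apply: bigcup_layers => [|i _|i _]; [exact: sublevelV_mono | exact: ICV_sub | exact: subsetUl].
Qed.

Lemma bigcup_ICE k : k < N -> \bigcup_(i < N | i < k.+1) ICE fv fe i = sublevelE fv fe k.
Proof.
apply: bigcup_layers => [|i _|i _]; [exact: sublevelE_mono | exact: ICE_sub | exact: subxx].
Qed.

Lemma bigcup_ICV_all : \bigcup_(i < N) ICV fv fe i = setT.
Proof.
apply: (bigcup_layers_setT (lev := sublevelV fv fe)) => [|i _|i _|v].
- exact: sublevelV_mono.
- exact: ICV_sub.
- exact: subsetUl.
have [lt_kN aval_k] := fvals_index (mem_fvals_V v).
by exists (index (fv v) (fvals fv fe)); rewrite // inE aval_k.
Qed.

Lemma bigcup_ICE_all : \bigcup_(i < N) ICE fv fe i = setT.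
Proof.
apply: (bigcup_layers_setT (lev := sublevelE fv fe)) => [|i _|i _|e].
- exact: sublevelE_mono.
- exact: ICE_sub.
- exact: subxx.
have [lt_kN aval_k] := fvals_index (mem_fvals_E e).
by exists (index (fe e) (fvals fv fe)); rewrite // inE aval_k.
Qed.

Lemma hg_stages_fb_schedule :
  hg_stages fv fe (fb_schedule N) = empty_stage G :: fb_stages fv fe.
Proof.
rewrite /hg_stages size_cat !size_map size_rev size_iota /= take0.
congr (_ :: _); first by rewrite /hg_stage /empty_stage !big_pred0.
rewrite iotaD map_cat /fb_stages addnC iotaDl [iota 1 N](iotaDl 1 0) -!map_comp.
congr (_ ++ _); apply/eq_in_map => k; rewrite mem_iota => /andP[_ lt_k] /=.
  rewrite /hg_stage -bigcup_ICV // -bigcup_ICE //; congr Stage.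
  1,2: by apply: eq_bigl => i; rewrite mem_take_fb_include ?ltn_ord.
  1,2: by rewrite big_pred0 // => -[i lt_iN] /=; rewrite mem_take_fb_contract //; lia.
rewrite /hg_stage -bigcup_ICV_all -bigcup_ICE_all; congr Stage; apply: eq_bigl => i.
1,2: by rewrite mem_take_fb_include ?ltn_addr ?ltn_ord.
1,2: by case: i => i lt_iN /=; rewrite mem_take_fb_contract //; lia.
Qed.

End FBisHourglass.

Local Open Scope ring_scope.

Lemma natr_F2_addb (x y : bool) : ((x (+) y)%:R : 'F_2) = x%:R + y%:R.
Proof.
by case: x; case: y; rewrite /= ?addr0 ?add0r // addrr_pchar2 // pchar_Fp.
Qed.

Section BoolRowReduction.
Variable n : nat.
Implicit Types (a b : seq bool) (L : seq (seq bool)).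

Definition bvec a : 'rV['F_2]_n := \row_(j < n) (nth false a j)%:R.
Definition bxor a b : seq bool := mkseq (fun j => nth false a j (+) nth false b j) n.
Definition bpivot a : nat := find (nth false a) (iota 0 n).
Definition bclear a L : seq (seq bool) :=
  [seq if nth false b (bpivot a) then bxor a b else b | b <- L].

(* The fuel is never exhausted: [bclear a L] has the size of [L]. *)
Fixpoint brank_fuel k L : nat :=
  match k, L with
  | k'.+1, a :: L' =>
      if (bpivot a < n)%N then (brank_fuel k' (bclear a L')).+1 else brank_fuel k' L'
  | _, _ => 0
  end.
Definition brank L : nat := brank_fuel (size L) L.

Definition bspan L : 'M['F_2]_n := (\sum_(a <- L) <<bvec a>>)%MS.

Lemma bvec_xor a b : bvec (bxor a b) = bvec a + bvec b.
Proof. by apply/rowP => j; rewrite !mxE nth_mkseq // natr_F2_addb. Qed.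

Lemma nth_bpivot a : (bpivot a < n)%N -> nth false a (bpivot a).
Proof.
move=> lt_pn; have has_a : has (nth false a) (iota 0 n) by rewrite has_find size_iota.
by have := nth_find 0 has_a; rewrite nth_iota.
Qed.

Lemma bvec_eq0 a : (n <= bpivot a)%N -> bvec a = 0.
Proof.
move=> le_np; have /hasPn no_a : ~~ has (nth false a) (iota 0 n).
  by rewrite has_find size_iota -leqNgt.
apply/rowP => j; rewrite !mxE.
have j_in : val j \in iota 0 n by rewrite mem_iota /= ltn_ord.
by rewrite (negbTE (no_a j j_in)).
Qed.

Lemma bspan_sub m L (B : 'M['F_2]_(m, n)) :
  (forall a, a \in L -> (bvec a <= B)%MS) -> (bspan L <= B)%MS.
Proof.
elim: L => [|a L IH] LB; first by rewrite /bspan big_nil sub0mx.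
rewrite /bspan big_cons addsmx_sub genmxE LB ?mem_head //.
by apply: IH => b Lb; rewrite LB // inE Lb orbT.
Qed.

Lemma bvec_sub_bspan a L : a \in L -> (bvec a <= bspan L)%MS.
Proof.
elim: L => [|b L IH] //; rewrite inE /bspan big_cons => /predU1P[->|La].
  by rewrite -genmxE addsmxSl.
exact: submx_trans (IH La) (addsmxSr _ _).
Qed.

Lemma bspan_clear a L :
  (<<bvec a>> + bspan L == <<bvec a>> + bspan (bclear a L))%MS.
Proof.
have a_sub L' : (bvec a <= <<bvec a>> + bspan L')%MS by rewrite -genmxE addsmxSl.
have span_sub L' b : b \in L' -> (bvec b <= <<bvec a>> + bspan L')%MS.
  by move=> Lb; apply: submx_trans (bvec_sub_bspan Lb) (addsmxSr _ _).
apply/andP; split; rewrite addsmx_sub genmxE a_sub /=; apply: bspan_sub => b.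
  move=> Lb; have := span_sub _ _ (map_f (fun b => if nth false b (bpivot a)
    then bxor a b else b) Lb).
  case: ifP => // _; rewrite bvec_xor => ab_sub.
  by rewrite -[bvec b](addKr (bvec a)); apply: addmx_sub; rewrite ?eqmx_opp.
case/mapP=> c Lc ->; case: ifP => _; last exact: span_sub.
by rewrite bvec_xor; apply: addmx_sub; [apply: a_sub | apply: span_sub].
Qed.

(* Every vector of [bclear a L] vanishes at the pivot of [a], i.e. lies in
   the kernel of the pivot coordinate, which [a] does not. *)
Lemma mxrank_pivot_cons a L : (bpivot a < n)%N ->
  \rank (<<bvec a>> + bspan (bclear a L))%MS = (\rank (bspan (bclear a L))).+1.
Proof.
move=> lt_pn; set c : 'M['F_2]_(n, 1) := delta_mx (Ordinal lt_pn) 0.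
have coord (u : 'rV_n) : (u *m c) 0 0 = u 0 (Ordinal lt_pn) by rewrite -colE mxE.
have clear_ker : (bspan (bclear a L) <= kermx c)%MS.
  apply: bspan_sub => _ /mapP[b _ ->]; apply/sub_kermxP/rowP => i.
  rewrite ord1 coord !mxE /=; case: ifP => [b_p|->] //.
  by rewrite nth_mkseq // nth_bpivot // b_p.
have a_p : bvec a 0 (Ordinal lt_pn) = 1 by rewrite mxE /= nth_bpivot.
have a_neq0 : bvec a != 0 by apply: contra_eqN a_p => /eqP->; rewrite mxE eq_sym oner_eq0.
rewrite mxrank_disjoint_sum; first by rewrite genmxE rank_rV a_neq0.
apply/eqP; rewrite -submx0; apply/rV_subP => u.
rewrite sub_capmx genmxE => /andP[/sub_rVP[k ->] /submx_trans/(_ clear_ker)].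
move/sub_kermxP/rowP/(_ 0); rewrite coord !mxE /= nth_bpivot // mulr1 => ->.
by rewrite scale0r sub0mx.
Qed.

Lemma mxrank_bspan_fuel k L : (size L <= k)%N -> \rank (bspan L) = brank_fuel k L.
Proof.
elim: k L => [|k IH] [|a L] leLk; rewrite /bspan ?big_nil ?mxrank0 //.
rewrite big_cons -/(bspan L) [brank_fuel _ _]/=; case: ifP => lt_pn.
  by rewrite (eqmx_rank (bspan_clear a L)) mxrank_pivot_cons // IH ?size_map.
by rewrite bvec_eq0 ?genmx0 ?adds0mx ?IH // leqNgt lt_pn.
Qed.

Lemma mxrank_bspan L : \rank (bspan L) = brank L.
Proof. exact: mxrank_bspan_fuel. Qed.

Lemma eqmx_rows (I : finType) (M : 'M['F_2]_(#|I|, n)) (f : I -> seq bool) :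
  (forall i, row i M = bvec (f (enum_val i))) -> (M :=: bspan (map f (enum I)))%MS.
Proof.
move=> rowM; apply/eqmxP/andP; split.
  by apply/row_subP => i; rewrite rowM bvec_sub_bspan ?map_f ?mem_enum.
apply: bspan_sub => _ /mapP[x _ ->].
by rewrite -[x]enum_rankK -rowM row_sub.
Qed.

Lemma mxrank_rows (I : finType) (M : 'M['F_2]_(#|I|, n)) (f : I -> seq bool) :
  (forall i, row i M = bvec (f (enum_val i))) -> \rank M = brank (map f (enum I)).
Proof. by move/eqmx_rows->; rewrite mxrank_bspan. Qed.

End BoolRowReduction.

Lemma enum_option (T : finType) : enum {: option T} = None :: map Some (enum T).
Proof.
by rewrite enumT /enum_mem {1}Finite.enum.unlock (@eq_filter _ _ predT) ?filter_predT.
Qed.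

Lemma enum_val_eq (T : finType) (j : 'I_#|T|) (x : T) :
  (enum_val j == x) = (j == enum_rank x).
Proof. by apply/eqP/eqP => [<-|->]; rewrite ?enum_valK ?enum_rankK. Qed.

Lemma delta_mx_bvec (T : finType) (x : T) :
  delta_mx 0 (enum_rank x) = bvec #|T| [seq y == x | y <- enum T].
Proof.
apply/rowP => j; rewrite !mxE (nth_map x) -?cardE ?ltn_ord //.
by rewrite -enum_val_nth enum_val_eq eqxx.
Qed.

Lemma bvec_nil n : bvec n [::] = 0.
Proof. by apply/rowP => j; rewrite !mxE nth_nil. Qed.

(* A stage given by boolean predicates instead of finite sets, so that
   everything below can be evaluated by [vm_compute]. *)
Record cstage (V E : Type) :=
  CStage { cVI : pred V; cEI : pred E; cVC : pred V; cEC : pred E }.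

Section StageRanks.
Variable G : graph.
Local Notation V := (gV G).
Local Notation E := (gE G).
Variables (lV : seq V) (lE : seq E).
Local Notation lO := (None :: map Some lV).
Implicit Types (cs ct : cstage V E) (A : pred E).

Definition cvact cs (w : option V) : bool :=
  if w is Some v then cVI cs v && ~~ cVC cs v else has (cVC cs) lV.
Definition ceact cs (e : E) : bool := cEI cs e && ~~ cEC cs e.
Definition crho cs (w : option V) : option V :=
  if w is Some v then (if cVC cs v then None else Some v) else None.

Definition bd_row cs (e : E) : seq bool :=
  [seq ceact cs e && ((w == crho cs (Some (gsrc e))) (+) (w == crho cs (Some (gtgt e))))
  | w <- lO].
Definition bd_row_on A cs (e : E) : seq bool := if A e then bd_row cs e else [::].
Definition proj_row A (e : E) : seq bool :=
  if A e then [seq e' == e | e' <- lE] else [::].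
Definition quot_row cs ct (w : option V) : seq bool :=
  [seq cvact cs w && (w' == crho ct w) | w' <- lO].

Definition cycle_dim A cs : nat :=
  (brank (size lE) (map (proj_row A) lE) - brank (size lO) (map (bd_row_on A cs) lE))%N.
(* [crank0]: dimension of the image of C_0(s) in C_0(t)/B_0(t).  [crank1]: the
   kernel of Z_1(s) -> C_1(t) consists of the cycles of s carried by edges
   that t contracts. *)
Definition crank0 cs ct : nat :=
  (brank (size lO) (map (quot_row cs ct) lO ++ map (bd_row ct) lE)
   - brank (size lO) (map (bd_row ct) lE))%N.
Definition crank1 cs ct : nat :=
  (cycle_dim (ceact cs) cs - cycle_dim (fun e => ceact cs e && cEC ct e) cs)%N.

Definition represents cs (st : stage G) : Prop :=
  [/\ forall v, (v \in sVI st) = cVI cs v, forall e, (e \in sEI st) = cEI cs e,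
      forall v, (v \in sVC st) = cVC cs v & forall e, (e \in sEC st) = cEC cs e].

Hypotheses (enumV : enum V = lV) (enumE : enum E = lE).

Lemma enum_optionV : enum {: option V} = lO.
Proof. by rewrite enum_option enumV. Qed.

Lemma card_optionV : #|{: option V}| = size lO.
Proof. by rewrite cardE enum_optionV. Qed.

Lemma card_edgesE : #|E| = size lE.
Proof. by rewrite cardE enumE. Qed.

Section Represents.
Variables (st : stage G) (cs : cstage V E).
Hypothesis st_cs : represents cs st.

Lemma represents_eact : eact st =1 ceact cs.
Proof. by case: st_cs => _ EI _ EC e; rewrite /eact /ceact EI EC. Qed.

Lemma represents_rho : rho st =1 crho cs.
Proof. by case: st_cs => _ _ VC _ [v|] //=; rewrite VC. Qed.

Lemma represents_vact : vact st =1 cvact cs.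
Proof.
case: st_cs => VI _ VC _ [v|] /=; first by rewrite VI VC.
apply/set0Pn/hasP => [[v Cv]|[v _ Cv]]; exists v; rewrite ?VC //.
  by rewrite -enumV mem_enum.
by rewrite -VC.
Qed.

Lemma row_bdmx i : row i (bdmx st) = bvec #|{: option V}| (bd_row cs (enum_val i)).
Proof.
rewrite rowK; apply/rowP => j; rewrite !mxE (nth_map None) -?enum_optionV -?cardE //.
rewrite /= -enum_val_nth represents_eact; case: ceact; last by rewrite mxE.
by have [_ _ VC _] := st_cs; rewrite !mxE natr_F2_addb !enum_val_eq !VC.
Qed.

End Represents.

Definition edge_proj A : 'M['F_2]_#|E| :=
  \matrix_(i < #|E|) (if A (enum_val i) then delta_mx 0 i else 0).

Lemma eq_edge_proj A B : A =1 B -> edge_proj A = edge_proj B.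
Proof. by move=> eqAB; apply/row_matrixP => i; rewrite !rowK eqAB. Qed.

Lemma edge_proj_entry A (u : 'rV['F_2]_#|E|) j :
  (u *m edge_proj A) 0 j = if A (enum_val j) then u 0 j else 0.
Proof.
rewrite !mxE (bigD1 j) //= big1 => [|k neq_kj]; rewrite !mxE.
  by case: ifP; rewrite !mxE ?eqxx ?mulr1 ?mulr0 ?addr0.
by case: ifP; rewrite !mxE ?mulr0 // eq_sym (negbTE neq_kj) andbF mulr0.
Qed.

Lemma sub_edge_projP A (u : 'rV['F_2]_#|E|) :
  reflect (forall j, ~~ A (enum_val j) -> u 0 j = 0) (u <= edge_proj A)%MS.
Proof.
apply: (iffP idP) => [/submxP[w ->] j Aj|u0]; first by rewrite edge_proj_entry (negbTE Aj).
suff -> : u = u *m edge_proj A by apply: submxMl.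
by apply/rowP => j; rewrite edge_proj_entry; case: ifP => // /negbT/u0->.
Qed.

Lemma sub_ker_edge_projP A (u : 'rV['F_2]_#|E|) :
  reflect (forall j, A (enum_val j) -> u 0 j = 0) (u <= kermx (edge_proj A))%MS.
Proof.
apply: (iffP sub_kermxP) => [/rowP u0 j Aj|u0].
  by have := u0 j; rewrite edge_proj_entry Aj mxE.
by apply/rowP => j; rewrite edge_proj_entry mxE; case: ifP => // /u0.
Qed.

Lemma edge_proj_capker A B :
  (edge_proj A :&: kermx (edge_proj B) :=: edge_proj (fun e => A e && ~~ B e))%MS.
Proof.
apply/eqmxP/andP; split; apply/rV_subP => u.
  rewrite sub_capmx => /andP[/sub_edge_projP uA /sub_ker_edge_projP uB].
  by apply/sub_edge_projP => j; rewrite negb_and negbK => /orP[/uA|/uB].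
move/sub_edge_projP=> uAB; rewrite sub_capmx; apply/andP; split.
  by apply/sub_edge_projP => j Aj; rewrite uAB // negb_and Aj.
by apply/sub_ker_edge_projP => j Bj; rewrite uAB // negb_and Bj orbT.
Qed.

Lemma row_edge_proj A i : row i (edge_proj A) = bvec #|E| (proj_row A (enum_val i)).
Proof.
by rewrite rowK /proj_row; case: ifP; rewrite ?bvec_nil // -enumE -delta_mx_bvec enum_valK.
Qed.

Lemma mxrank_cycles A st cs : represents cs st ->
  \rank (edge_proj A :&: kermx (bdmx st))%MS = cycle_dim A cs.
Proof.
move=> st_cs.
have projE : \rank (edge_proj A) = brank (size lE) (map (proj_row A) lE).
  by rewrite (mxrank_rows (row_edge_proj A)) enumE card_edgesE.
have bdE : \rank (edge_proj A *m bdmx st) = brank (size lO) (map (bd_row_on A cs) lE).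
  rewrite (mxrank_rows (f := bd_row_on A cs)) ?enumE ?card_optionV // => i.
  rewrite row_mul rowK /bd_row_on; case: ifP => _; last by rewrite mul0mx bvec_nil.
  by rewrite -rowE (row_bdmx st_cs).
by rewrite /cycle_dim -projE -bdE -(mxrank_mul_ker (edge_proj A) (bdmx st)) addKn.
Qed.

Lemma row_quot s t cs ct : represents cs s -> represents ct t -> forall i,
  row i (C0mx s *m Rmx t) = bvec #|{: option V}| (quot_row cs ct (enum_val i)).
Proof.
move=> s_cs t_ct i; rewrite row_mul rowK /quot_row -(represents_vact s_cs).
case: ifP => act; last first.
  by rewrite mul0mx; apply/rowP => j; rewrite !mxE (nth_map None) -?enum_optionV -?cardE.
rewrite -rowE rowK /vdelta delta_mx_bvec enum_optionV; congr bvec; apply: eq_map => w.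
by rewrite (represents_rho t_ct).
Qed.

Lemma Pmx_edge_proj t : Pmx t = edge_proj (fun e => e \notin sEC t).
Proof. by apply/row_matrixP => i; rewrite !rowK; case: ifP. Qed.

Lemma rank0E s t cs ct : represents cs s -> represents ct t -> rank0 s t = crank0 cs ct.
Proof.
move=> s_cs t_ct; rewrite /rank0 /crank0 -card_optionV.
rewrite (mxrank_rows (f := bd_row ct) (row_bdmx t_ct)) enumE; congr (_ - _)%N.
have sumE : (C0mx s *m Rmx t + bdmx t :=:
   bspan #|{: option V}| (map (quot_row cs ct) (enum {: option V}) ++ map (bd_row ct) (enum E)))%MS.
  by rewrite /bspan big_cat; apply: adds_eqmx; apply: eqmx_rows;
    [apply: row_quot | apply: row_bdmx].
by rewrite sumE mxrank_bspan enum_optionV enumE.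
Qed.

Lemma rank1E s t cs ct : represents cs s -> represents ct t -> rank1 s t = crank1 cs ct.
Proof.
move=> s_cs t_ct; rewrite /rank1 /crank1.
rewrite -(addnK (\rank (H1mx s :&: kermx (Pmx t)))%MS (\rank _)) mxrank_mul_ker.
have H1E : H1mx s = (edge_proj (ceact cs) :&: kermx (bdmx s))%MS.
  by rewrite /H1mx -(eq_edge_proj (represents_eact s_cs)).
have capE : (H1mx s :&: kermx (Pmx t) :=:
             edge_proj (fun e => ceact cs e && cEC ct e) :&: kermx (bdmx s))%MS.
  rewrite H1E -capmxA (capmxC (kermx _)) capmxA Pmx_edge_proj.
  apply: cap_eqmx => //; apply: eqmx_trans (edge_proj_capker _ _) _.
  rewrite (eq_edge_proj (B := fun e => ceact cs e && cEC ct e)) // => e.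
  by have [_ _ _ ->] := t_ct; rewrite negbK.
by rewrite capE H1E !(mxrank_cycles _ s_cs).
Qed.

End StageRanks.

Local Close Scope ring_scope.

Lemma in_bigcup_ord (T : finType) N (P : pred nat) (F : nat -> {set T}) x :
  (x \in \bigcup_(i < N | P i) F i) = has (fun i => P i && (x \in F i)) (iota 0 N).
Proof.
apply/bigcupP/hasP => [[i Pi Fx]|[i]].
  by exists (val i); rewrite ?Pi ?Fx // mem_iota add0n ltn_ord.
by rewrite mem_iota => /andP[_ lt_iN] /andP[Pi Fx]; exists (Ordinal lt_iN).
Qed.

Section StageSeqs.
Variable G : graph.
Local Notation V := (gV G).
Local Notation E := (gE G).
Variables (lV : seq V) (lE : seq E).

Definition cstage0 : cstage V E := CStage pred0 pred0 pred0 pred0.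

Definition chrank k (cs ct : cstage V E) : nat :=
  match k with 0 => crank0 lV lE cs ct | 1 => crank1 lV lE cs ct | _ => 0 end.

Definition cprank (cL : seq (cstage V E)) k b d : nat :=
  if b <= d < size cL then chrank k (nth cstage0 cL b) (nth cstage0 cL d) else 0.

Fixpoint represents_seq (cL : seq (cstage V E)) (L : seq (stage G)) : Prop :=
  match cL, L with
  | [::], [::] => True
  | cs :: cL', st :: L' => represents cs st /\ represents_seq cL' L'
  | _, _ => False
  end.

Lemma represents_seq_size cL L : represents_seq cL L -> size cL = size L.
Proof. by elim: cL L => [|cs cL IH] [|st L] //= [_ /IH->]. Qed.

Lemma represents_seq_nth cL L i : represents_seq cL L -> i < size L ->
  represents (nth cstage0 cL i) (nth (empty_stage G) L i).
Proof.
elim: cL L i => [|cs cL IH] [|st L] [|i] //= [st_cs cLL] lt_iL //.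
exact: IH.
Qed.

Lemma represents_seq_cat cL1 cL2 L1 L2 :
  represents_seq cL1 L1 -> represents_seq cL2 L2 -> represents_seq (cL1 ++ cL2) (L1 ++ L2).
Proof.
elim: cL1 L1 => [|cs cL IH] [|st L] //= [st_cs cLL] cLL2.
by split; last exact: IH.
Qed.

Lemma represents_seq_map (X : Type) (f : X -> cstage V E) (g : X -> stage G) s :
  (forall x, represents (f x) (g x)) -> represents_seq (map f s) (map g s).
Proof. by move=> fg; elim: s => //= x s ->. Qed.

Hypotheses (enumV : enum V = lV) (enumE : enum E = lE).

Lemma prank_represents cL L k b d : represents_seq cL L -> prank L k b d = cprank cL k b d.
Proof.
move=> cLL; rewrite /prank /cprank (represents_seq_size cLL).
case: ifP => // /andP[le_bd lt_dL]; have lt_bL := leq_ltn_trans le_bd lt_dL.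
have [cLb cLd] := (represents_seq_nth cLL lt_bL, represents_seq_nth cLL lt_dL).
by case: k => [|[|k]] //=; [apply: rank0E | apply: rank1E].
Qed.

End StageSeqs.

Lemma cprank_ge2 (G : graph) lV lE (cL : seq (cstage (gV G) (gE G))) k b d :
  1 < k -> cprank lV lE cL k b d = 0.
Proof. by case: k => [|[|k]] //; rewrite /cprank if_same. Qed.

Lemma cprank_ge_size (G : graph) lV lE (cL : seq (cstage (gV G) (gE G))) k b d :
  size cL <= d -> cprank lV lE cL k b d = 0.
Proof. by move=> le_Ld; rewrite /cprank ltnNge le_Ld andbF. Qed.

Lemma eq_pdgm (G H : graph) (L : seq (stage G)) (L' : seq (stage H)) :
  (forall k b d, prank L k b d = prank L' k b d) ->
  forall k b d, pdgm L k b d = pdgm L' k b d.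
Proof. by move=> eqL k [|b] d; rewrite /pdgm !eqL. Qed.

Section ComputableFiltration.
Variable G : graph.
Local Notation V := (gV G).
Local Notation E := (gE G).
Variables (lV : seq V) (lE : seq E).
Variables (R : realDomainType) (fv : V -> R) (fe : E -> R).

Definition cfvals : seq R := sort <=%R (undup (map fv lV ++ map fe lE)).
Definition cnIC : nat := size cfvals.

(* [cbelow x k] iff [x <= a_(k-1)], i.e. value [x] occurs in [G_(k-1)];
   in particular [cbelow x 0] is false. *)
Definition cbelow (x : R) (k : nat) : bool :=
  if k is k'.+1 then (x <= nth 0 cfvals k')%R else false.
Definition cICE i e : bool := cbelow (fe e) i.+1 && ~~ cbelow (fe e) i.
Definition cICV i v : bool :=
  cbelow (fv v) i.+1 && ~~ cbelow (fv v) i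
  || has (fun e => cICE i e && ((gsrc e == v) || (gtgt e == v))) lE.
Definition cbigcup (T : Type) (P : pred nat) (F : nat -> T -> bool) (x : T) : bool :=
  has (fun i => P i && F i x) (iota 0 cnIC).

Definition cfb_stages : seq (cstage V E) :=
  [seq CStage (fun v => cbelow (fv v) k.+1) (fun e => cbelow (fe e) k.+1) pred0 pred0
  | k <- iota 0 cnIC] ++
  [seq CStage predT predT (cbigcup (fun i => cnIC - m <= i) cICV)
                          (cbigcup (fun i => cnIC - m <= i) cICE)
  | m <- iota 1 cnIC].

Definition chg_stage (p : seq (bool * nat)) : cstage V E :=
  CStage (cbigcup (fun i => (true, i) \in p) cICV) (cbigcup (fun i => (true, i) \in p) cICE)
         (cbigcup (fun i => (false, i) \in p) cICV) (cbigcup (fun i => (false, i) \in p) cICE).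

Definition chg_stages (s : seq (bool * nat)) : seq (cstage V E) :=
  [seq chg_stage (take k s) | k <- iota 0 (size s).+1].

Variables (gv : V -> R) (ge : E -> R).
Hypotheses (gvE : gv =1 fv) (geE : ge =1 fe) (enumV : enum V = lV) (enumE : enum E = lE).

Lemma fvals_cfvals : fvals gv ge = cfvals.
Proof. by rewrite /fvals enumV enumE (eq_map gvE) (eq_map geE). Qed.

Lemma nIC_cnIC : nIC gv ge = cnIC.
Proof. by rewrite /nIC fvals_cfvals. Qed.

Lemma in_sublevelV k v : (v \in sublevelV gv ge k) = cbelow (fv v) k.+1.
Proof. by rewrite inE gvE /aval fvals_cfvals. Qed.

Lemma in_sublevelE k e : (e \in sublevelE gv ge k) = cbelow (fe e) k.+1.
Proof. by rewrite inE geE /aval fvals_cfvals. Qed.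

Lemma in_ICE i e : (e \in ICE gv ge i) = cICE i e.
Proof.
by rewrite in_setD in_sublevelE andbC; case: i => [|i] /=; rewrite ?in_set0 ?in_sublevelE.
Qed.

Lemma in_ICV i v : (v \in ICV gv ge i) = cICV i v.
Proof.
rewrite in_setU in_setD in_sublevelV andbC; congr (_ && _ || _).
  by case: i => [|i] /=; rewrite ?in_set0 ?in_sublevelV.
rewrite inE; apply/existsP/hasP => [[e /andP[ICe ve]]|[e _ /andP[ICe ve]]].
  by exists e; rewrite -?enumE ?mem_enum // -in_ICE ICe.
by exists e; rewrite in_ICE ICe.
Qed.

Lemma represents_fb : represents_seq cfb_stages (fb_stages gv ge).
Proof.
rewrite /fb_stages /cfb_stages -nIC_cnIC; apply: represents_seq_cat;
  apply: represents_seq_map => k; split => x /=;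
  rewrite ?in_set0 ?in_setT ?in_sublevelV ?in_sublevelE ?in_bigcup_ord ?nIC_cnIC //;
  by apply: eq_has => i; rewrite ?in_ICV ?in_ICE.
Qed.

Lemma represents_hg s : represents_seq (chg_stages s) (hg_stages gv ge s).
Proof.
apply: represents_seq_map => k; split => x /=;
  rewrite (@in_bigcup_ord _ _ (fun j => (_, j) \in _)) nIC_cnIC;
  by apply: eq_has => i; rewrite ?in_ICV ?in_ICE.
Qed.

End ComputableFiltration.

Lemma eq_cprank (G H : graph) lV lE lV' lE' (cL : seq (cstage (gV G) (gE G)))
    (cL' : seq (cstage (gV H) (gE H))) :
  size cL = size cL' ->
  all (fun k => all (fun d => all (fun b =>
    cprank lV lE cL k b d == cprank lV' lE' cL' k b d) (iota 0 d.+1)) (iota 0 (size cL)))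
    (iota 0 2) ->
  forall k b d, cprank lV lE cL k b d = cprank lV' lE' cL' k b d.
Proof.
move=> eq_size check k b d.
case: (ltnP 1 k) => [lt1k|le_k1]; first by rewrite !cprank_ge2.
case: (ltnP d (size cL)) => [lt_dL|le_Ld]; last by rewrite !cprank_ge_size -?eq_size.
case: (leqP b d) => [le_bd|lt_db]; last by rewrite /cprank leqNgt lt_db.
have /allP/(_ k) := check; rewrite mem_iota => /(_ le_k1)/allP/(_ d).
by rewrite mem_iota => /(_ lt_dL)/allP/(_ b); rewrite mem_iota ltnS => /(_ le_bd)/eqP.
Qed.

Lemma card_set_count (T : finType) (P : pred T) : #|[set x | P x]| = count P (enum T).
Proof.
rewrite cardE (@eq_enum _ _ P) => [|x]; last by rewrite !inE.
by rewrite enumT /enum_mem size_filter.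
Qed.

Section DegreeCount.
Variables (G : graph) (lE : seq (gE G)).

Definition cdeg (v : gV G) : nat :=
  count (fun e => gsrc e == v) lE + count (fun e => gtgt e == v) lE.
Definition cdegv (v : gV G) : int := (cdeg v)%:Z.
Definition cdege (e : gE G) : int := (maxn (cdeg (gsrc e)) (cdeg (gtgt e)))%:Z.

Hypothesis enumE : enum (gE G) = lE.

Lemma deg_cdeg v : deg v = cdeg v.
Proof. by rewrite /deg !card_set_count enumE. Qed.

Lemma degv_cdegv : @degv G =1 cdegv.
Proof. by move=> v; rewrite /degv deg_cdeg. Qed.

Lemma dege_cdege : @dege G =1 cdege.
Proof. by move=> e; rewrite /dege !deg_cdeg. Qed.

End DegreeCount.

(* Unlike [inord k], this reduces under [vm_compute]. *)
Definition ord_mod (n k : nat) : 'I_n.+1 := Ordinal (ltn_pmod k (ltn0Sn n)).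

Lemma enum_ord_mod n : enum 'I_n.+1 = map (ord_mod n) (iota 0 n.+1).
Proof.
apply: (inj_map val_inj); rewrite val_enum_ord -map_comp map_id_in // => k.
by rewrite mem_iota => /= /modn_small.
Qed.

Definition edge_graph (n m : nat) (es : seq (nat * nat)) : graph :=
  @Graph 'I_n.+1 'I_m.+1 (fun e => ord_mod n (nth (0, 0) es e).1)
                         (fun e => ord_mod n (nth (0, 0) es e).2).

Section EdgeGraphDegrees.
Variables (n m : nat) (es : seq (nat * nat)).
Local Notation Gr := (edge_graph n m es).
Local Notation lV := (map (ord_mod n) (iota 0 n.+1) : seq (gV Gr)).
Local Notation lE := (map (ord_mod m) (iota 0 m.+1) : seq (gE Gr)).

Let enumV : enum (gV Gr) = lV := enum_ord_mod n.
Let enumE : enum (gE Gr) = lE := enum_ord_mod m.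
Let degvE : @degv Gr =1 cdegv lE := degv_cdegv enumE.
Let degeE : @dege Gr =1 cdege lE := dege_cdege enumE.

Definition deg_cfb_stages : seq (cstage (gV Gr) (gE Gr)) :=
  cfb_stages lV lE (cdegv lE) (cdege lE).
Definition deg_chg_stages (s : seq (bool * nat)) : seq (cstage (gV Gr) (gE Gr)) :=
  chg_stages lV lE (cdegv lE) (cdege lE) s.

Lemma nIC_edge_graph : nIC (@degv Gr) (@dege Gr) = cnIC lV lE (cdegv lE) (cdege lE).
Proof. exact: nIC_cnIC degvE degeE enumV enumE. Qed.

Lemma prank_fb_edge_graph k b d :
  prank (fb_stages (@degv Gr) (@dege Gr)) k b d = cprank lV lE deg_cfb_stages k b d.
Proof. exact/prank_represents/(represents_fb degvE degeE enumV enumE). Qed.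

Lemma prank_hg_edge_graph s k b d :
  prank (hg_stages (@degv Gr) (@dege Gr) s) k b d = cprank lV lE (deg_chg_stages s) k b d.
Proof. exact/prank_represents/(represents_hg degvE degeE enumV enumE s). Qed.

End EdgeGraphDegrees.

Definition example_G : graph := edge_graph 2 2 [:: (0, 0); (0, 1); (2, 2)].
Definition example_H : graph := edge_graph 3 3 [:: (0, 0); (0, 1); (1, 2); (3, 3)].
Definition separating_schedule : seq (bool * nat) :=
  [:: (true, 0); (true, 1); (true, 2); (false, 0); (false, 2); (false, 1)].

Lemma fb_prank_examples k b d :
  prank (fb_stages (@degv example_G) (@dege example_G)) k b d
  = prank (fb_stages (@degv example_H) (@dege example_H)) k b d.
Proof.
by rewrite !prank_fb_edge_graph; apply: eq_cprank; vm_compute.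
Qed.

Lemma separating_schedule_hourglass : hourglass_schedule 3 separating_schedule.
Proof. by split=> [|[|[|[|j]]]]. Qed.

Lemma nIC_example_G : nIC (@degv example_G) (@dege example_G) = 3.
Proof. by rewrite nIC_edge_graph; vm_compute. Qed.

Lemma nIC_example_H : nIC (@degv example_H) (@dege example_H) = 3.
Proof. by rewrite nIC_edge_graph; vm_compute. Qed.

Lemma hg_pdgm_examples :
  pdgm (hg_stages (@degv example_G) (@dege example_G) separating_schedule) 1 5 5
  <> pdgm (hg_stages (@degv example_H) (@dege example_H) separating_schedule) 1 5 5.
Proof. by rewrite /pdgm !prank_hg_edge_graph; vm_compute. Qed.

Theorem proposition2 :
  (forall (R : realDomainType) (G : graph) (fv : gV G -> R) (fe : gE G -> R),
      is_filtration fv fe ->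
      exists s : seq (bool * nat),
        hourglass_schedule (nIC fv fe) s /\
        hg_stages fv fe s = empty_stage G :: fb_stages fv fe)
  /\
  (exists G H : graph,
      (forall k b d : nat,
          pdgm (fb_stages (@degv G) (@dege G)) k b d
          = pdgm (fb_stages (@degv H) (@dege H)) k b d) /\
      exists s : seq (bool * nat),
        hourglass_schedule (nIC (@degv G) (@dege G)) s /\
        hourglass_schedule (nIC (@degv H) (@dege H)) s /\
        exists k b d : nat,
          pdgm (hg_stages (@degv G) (@dege G) s) k b d
          <> pdgm (hg_stages (@degv H) (@dege H) s) k b d).
Proof.
split=> [R G fv fe filt|].
  exists (fb_schedule (nIC fv fe)).
  by split; [exact: fb_schedule_hourglass | exact: hg_stages_fb_schedule].
exists example_G, example_H; split; first exact: eq_pdgm fb_prank_examples.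
exists separating_schedule; rewrite nIC_example_G nIC_example_H.
split; first exact: separating_schedule_hourglass.
split; first exact: separating_schedule_hourglass.
by exists 1, 5, 5; exact: hg_pdgm_examples.
Qed.
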